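(* Let $m \in \mathbb{N}$, $k \geq 4$ and $|q - q_k| < q_k^{-(m+2)k-3}$. Define $\epsilon_q$ by $1 = \pi_q((1^{k-1}0)^\infty) + \epsilon_q$. Then $$-q_k^{-(m+1)k+1} < \epsilon_q < q_k^{-(m+2)k+1}.$$
   Context: $q_k$ is the unique root in $(1,2)$ of $x^k - x^{k-1} - \cdots - x - 1 = 0$. $\pi_q((\epsilon_j)_{j\ge1}) = \sum_{j\ge1}\epsilon_j q^{-j}$, and $(1^{k-1}0)^\infty$ is the periodic sequence repeating the word of $k-1$ ones followed by a zero. *)

From Stdlib Require Import Reals Lra Lia.
From Coquelicot Require Import Coquelicot.
Open Scope R_scope.

(* x is a root of x^k - x^(k-1) - ... - x - 1 lying in (1,2);
   for k >= 2 there is exactly one such root, namely q_k. *)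
Definition is_qk (k : nat) (x : R) : Prop :=
  1 < x < 2 /\ x ^ k - sum_f_R0 (fun i => x ^ i) (k - 1) = 0.

(* pi_q((eps_j)_{j>=1}) = sum_{j>=1} eps_j q^{-j}; eps is indexed from 1. *)
Definition pi_q (q : R) (eps : nat -> R) : R :=
  Series (fun n => eps (S n) / q ^ (S n)).

(* (1^{k-1} 0)^infinity, 1-indexed: eps_j = 0 iff k divides j, else 1. *)
Definition per_seq (k : nat) (j : nat) : R :=
  if Nat.eqb (j mod k) 0 then 0 else 1.

Definition eps_q (k : nat) (q : R) : R := 1 - pi_q q (per_seq k).

From Stdlib Require Import Reals Lra Lia.
From Coquelicot Require Import Coquelicot.
Open Scope R_scope.

(* With x = 1/q, summing the k-periodic series gives the closed form
   eps_q (1 - x) (1 - x^k) = 1 - 2x + x^(k+1), whose right-hand side vanishes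
   at x = 1/q_k because q_k^k (2 - q_k) = 1.  For q, q_k > 20/11 the factor
   (1 - x) (1 - x^k) is at least (9/20)^2 and the trinomial is 3-Lipschitz on
   [0, 11/20], so |eps_q| <= 5 |q - q_k|.  As q_k^4 > 13 > 5, the hypothesis
   then yields |eps_q| < q_k^(-(m+2)k+1), which gives both bounds. *)

Lemma Series_periodic_mul_pow (c : nat -> R) (k : nat) (M x : R) :
  (0 < k)%nat -> (forall n, c (k + n)%nat = c n) ->
  (forall n, Rabs (c n) <= M) -> Rabs x < 1 ->
  Series (fun n => c n * x ^ n) * (1 - x ^ k)
  = sum_f_R0 (fun n => c n * x ^ n) (pred k).
Proof.
  intros Hk Hper HM Hx.
  set (a := fun n => c n * x ^ n).
  assert (Hex : ex_series a).
  { apply ex_series_Rabs.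
    apply (@ex_series_le R_AbsRing R_CompleteNormedModule _ (fun n => M * Rabs x ^ n)).
    - intro n. change (norm (Rabs (a n))) with (Rabs (Rabs (a n))).
      unfold a. rewrite Rabs_Rabsolu, Rabs_mult, <- RPow_abs.
      apply Rmult_le_compat_r; [apply pow_le, Rabs_pos | apply HM].
    - apply (@ex_series_scal_l R_AbsRing R_CompleteNormedModule M).
      eexists. apply is_series_geom. now rewrite Rabs_Rabsolu. }
  assert (Hshift : Series (fun n => a (k + n)%nat) = x ^ k * Series a).
  { rewrite <- Series_scal_l. apply Series_ext. intro n.
    unfold a. rewrite Hper, pow_add. ring. }
  pose proof (Series_incr_n a k Hk Hex) as Hsplit.
  rewrite Hshift in Hsplit. lra.
Qed.

Lemma per_seq_periodic (k n : nat) : per_seq k (S (k + n)) = per_seq k (S n).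
Proof.
  unfold per_seq. replace (S (k + n)) with (S n + 1 * k)%nat by lia.
  now rewrite Nat.Div0.mod_add.
Qed.

Lemma Rabs_per_seq_le (k j : nat) : Rabs (per_seq k j) <= 1.
Proof.
  unfold per_seq; destruct (Nat.eqb _ _);
    [rewrite Rabs_R0 | rewrite Rabs_R1]; lra.
Qed.

Lemma sum_per_seq_period (j : nat) (x : R) :
  sum_f_R0 (fun n => per_seq (S (S j)) (S n) * x ^ n) (S j)
  = sum_f_R0 (fun n => x ^ n) j.
Proof.
  simpl sum_f_R0 at 1.
  replace (per_seq (S (S j)) (S (S j))) with 0
    by (unfold per_seq; now rewrite Nat.Div0.mod_same).
  rewrite Rmult_0_l, Rplus_0_r.
  apply sum_eq. intros i Hi.
  unfold per_seq. rewrite Nat.mod_small by lia. simpl. ring.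
Qed.

Lemma eps_q_closed_form (k : nat) (q : R) : (2 <= k)%nat -> 1 < q ->
  eps_q k q * ((1 - / q) * (1 - (/ q) ^ k)) = 1 - 2 * / q + (/ q) ^ S k.
Proof.
  intros Hk Hq.
  destruct k as [|[|j]]; try lia.
  set (x := / q).
  assert (Hx : 0 < x < 1).
  { split; [apply Rinv_0_lt_compat | rewrite <- Rinv_1; apply Rinv_lt_contravar]; lra. }
  assert (Hpi : pi_q q (per_seq (S (S j)))
                = x * Series (fun n => per_seq (S (S j)) (S n) * x ^ n)).
  { unfold pi_q. rewrite <- Series_scal_l. apply Series_ext. intro n.
    unfold x, Rdiv. rewrite <- pow_inv. simpl. ring. }
  pose proof (Series_periodic_mul_pow (fun n => per_seq (S (S j)) (S n)) (S (S j)) 1 x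
                ltac:(lia) (per_seq_periodic (S (S j))) (fun n => Rabs_per_seq_le _ (S n))
                ltac:(rewrite Rabs_pos_eq; lra)) as Hser.
  cbv beta in Hser. simpl pred in Hser. rewrite sum_per_seq_period in Hser.
  unfold eps_q. fold x. rewrite Hpi.
  set (T := Series _) in *. set (G := sum_f_R0 _ j) in *.
  assert (HG : G * (1 - x) = 1 - x ^ S j) by (unfold G; rewrite tech3 by lra; field; lra).
  transitivity ((1 - x) * (1 - x ^ S (S j)) - x * (T * (1 - x ^ S (S j)) * (1 - x)));
    [ring |].
  rewrite Hser, HG. simpl. ring.
Qed.

Lemma is_qk_pow_mul (k : nat) (qk : R) :
  (1 <= k)%nat -> is_qk k qk -> qk ^ k * (2 - qk) = 1.
Proof.
  intros Hk [Hbounds Hroot]. rewrite tech3 in Hroot by lra.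
  replace (S (k - 1)) with k in Hroot by lia.
  apply (Rmult_eq_compat_r (1 - qk)) in Hroot.
  unfold Rdiv in Hroot. rewrite Rmult_minus_distr_r, Rmult_assoc, Rinv_l in Hroot by lra.
  lra.
Qed.

Lemma is_qk_inv_root (k : nat) (qk : R) :
  (1 <= k)%nat -> is_qk k qk -> 1 - 2 * / qk + (/ qk) ^ S k = 0.
Proof.
  intros Hk Hqk.
  pose proof (is_qk_pow_mul k qk Hk Hqk) as E.
  destruct Hqk as [Hbounds _].
  rewrite pow_inv. simpl pow.
  replace (qk ^ k) with (/ (2 - qk))
    by (apply (Rmult_eq_reg_r (2 - qk)); [rewrite E; field |]; lra).
  field. lra.
Qed.

Lemma is_qk_gt_19_10 (k : nat) (qk : R) : (4 <= k)%nat -> is_qk k qk -> 19/10 < qk.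
Proof.
  intros Hk Hqk. pose proof (is_qk_pow_mul k qk ltac:(lia) Hqk) as E.
  destruct Hqk as [[H1 H2] _].
  destruct (Rlt_or_le (19/10) qk) as [|Hle]; [assumption | exfalso].
  assert (qk ^ 4 <= qk ^ k) by (apply Rle_pow; [lra | lia]).
  assert (qk ^ 4 * (2 - qk) > 1).
  { simpl. assert (qk * (qk * (qk * (qk - 1) - 1) - 1) - 1 < 0) by nra. nra. }
  nra.
Qed.

Lemma Rabs_pow_sub_pow_le (a b c : R) (n : nat) : 0 <= a <= c -> 0 <= b <= c ->
  Rabs (a ^ S n - b ^ S n) <= INR (S n) * Rabs (a - b) * c ^ n.
Proof.
  intros Ha Hb. induction n as [|n IH].
  - simpl. replace (a * 1 - b * 1) with (a - b) by ring. lra.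
  - replace (a ^ S (S n) - b ^ S (S n))
      with (a * (a ^ S n - b ^ S n) + b ^ S n * (a - b)) by (simpl; ring).
    eapply Rle_trans; [apply Rabs_triang|]. rewrite !Rabs_mult.
    rewrite (Rabs_pos_eq a), (Rabs_pos_eq (b ^ S n)) by (try apply pow_le; lra).
    assert (b ^ S n <= c ^ S n) by (apply pow_incr; lra).
    assert (0 <= Rabs (a - b)) by apply Rabs_pos.
    assert (0 <= c ^ n) by (apply pow_le; lra).
    assert (a * Rabs (a ^ S n - b ^ S n) <= c * (INR (S n) * Rabs (a - b) * c ^ n))
      by (apply Rmult_le_compat; try apply Rabs_pos; lra).
    assert (b ^ S n * Rabs (a - b) <= c ^ S n * Rabs (a - b)) by nra.
    rewrite S_INR. simpl pow in *. nra.
Qed.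

Lemma INR_mul_pow_11_20_le_1 (n : nat) : (4 <= n)%nat -> INR (S n) * (11/20) ^ n <= 1.
Proof.
  intros Hn. induction Hn as [|n Hn IH].
  - simpl. lra.
  - assert (4 <= INR n) by (replace 4 with (INR 4) by (simpl; lra); now apply le_INR).
    assert (0 <= (11/20) ^ n) by (apply pow_le; lra).
    rewrite !S_INR in *. simpl pow. nra.
Qed.

Lemma Rabs_trinomial_sub_le (k : nat) (x y : R) :
  (4 <= k)%nat -> 0 <= x <= 11/20 -> 0 <= y <= 11/20 ->
  Rabs ((1 - 2 * x + x ^ S k) - (1 - 2 * y + y ^ S k)) <= 3 * Rabs (x - y).
Proof.
  intros Hk Hx Hy.
  replace ((1 - 2 * x + x ^ S k) - (1 - 2 * y + y ^ S k))
    with (-2 * (x - y) + (x ^ S k - y ^ S k)) by ring.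
  eapply Rle_trans; [apply Rabs_triang|].
  rewrite Rabs_mult, Rabs_left by lra.
  pose proof (Rabs_pow_sub_pow_le x y (11/20) k Hx Hy).
  pose proof (INR_mul_pow_11_20_le_1 k Hk).
  pose proof (Rabs_pos (x - y)).
  nra.
Qed.

Lemma Rabs_eps_q_le (k : nat) (qk q : R) : (4 <= k)%nat -> is_qk k qk -> 20/11 < q ->
  Rabs (eps_q k q) <= 5 * Rabs (q - qk).
Proof.
  intros Hk Hqk Hq.
  pose proof (is_qk_gt_19_10 k qk Hk Hqk) as Hqk_gt.
  pose proof (eps_q_closed_form k q ltac:(lia) ltac:(lra)) as Hclosed.
  pose proof (is_qk_inv_root k qk ltac:(lia) Hqk) as Hroot.
  set (x := / q) in *. set (y := / qk) in *.
  assert (Hx : 0 < x < 11/20).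
  { split; [apply Rinv_0_lt_compat | apply (Rmult_lt_reg_l q); [|unfold x; rewrite Rinv_r]]; lra. }
  assert (Hy : 0 < y < 11/20).
  { split; [apply Rinv_0_lt_compat | apply (Rmult_lt_reg_l qk); [|unfold y; rewrite Rinv_r]]; lra. }
  assert (Hxy : Rabs (x - y) <= 121/400 * Rabs (q - qk)).
  { replace (x - y) with (- (q - qk) * x * y) by (unfold x, y; field; lra).
    rewrite !Rabs_mult, Rabs_Ropp, (Rabs_pos_eq x), (Rabs_pos_eq y) by lra.
    assert (x * y <= 121/400) by nra. pose proof (Rabs_pos (q - qk)). nra. }
  assert (Hden : 81/400 <= (1 - x) * (1 - x ^ k)).
  { destruct k as [|k]; [lia |].
    assert (0 <= x ^ k < 1) by (apply pow_lt_1_compat; [lra | lia]).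
    simpl pow. assert (x * x ^ k <= x) by nra. nra. }
  pose proof (Rabs_trinomial_sub_le k x y Hk ltac:(lra) ltac:(lra)) as Htri.
  rewrite Hroot, Rminus_0_r, <- Hclosed, Rabs_mult, (Rabs_pos_eq (_ * _)) in Htri by lra.
  pose proof (Rabs_pos (eps_q k q)). nra.
Qed.

Theorem lemma3p5 (m k : nat) (qk q : R) :
  (4 <= k)%nat ->
  is_qk k qk ->
  Rabs (q - qk) < / qk ^ ((m + 2) * k + 3) ->
  - / qk ^ ((m + 1) * k - 1) < eps_q k q /\ eps_q k q < / qk ^ ((m + 2) * k - 1).
Proof.
  intros Hk Hqk Hclose.
  pose proof (is_qk_gt_19_10 k qk Hk Hqk) as Hqk_gt.
  set (N := ((m + 2) * k - 1)%nat).
  replace ((m + 2) * k + 3)%nat with (N + 4)%nat in Hclose by (unfold N; nia).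
  rewrite pow_add, Rinv_mult in Hclose.
  assert (Hqk4 : 13 < qk ^ 4) by (assert (361/100 < qk * qk) by nra; simpl; nra).
  assert (HqkN : 1 <= qk ^ N) by (apply pow_R1_Rle; lra).
  assert (Hinv4 : / qk ^ 4 < / 13) by (apply Rinv_lt_contravar; lra).
  assert (HinvN : 0 < / qk ^ N <= 1).
  { split; [apply Rinv_0_lt_compat | rewrite <- Rinv_1; apply Rinv_le_contravar]; lra. }
  assert (Hq : 20/11 < q).
  { apply Rabs_def2 in Hclose as [_ Hlow]. nra. }
  pose proof (Rabs_eps_q_le k qk q Hk Hqk Hq) as Heps.
  assert (Hweaker : / qk ^ N <= / qk ^ ((m + 1) * k - 1)).
  { apply Rinv_le_contravar; [apply pow_lt; lra |].
    apply Rle_pow; [lra | unfold N; nia]. }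
  assert (Hbound : Rabs (eps_q k q) < / qk ^ N) by nra.
  apply Rabs_def2 in Hbound. lra.
Qed.
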